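(* Let $\mathcal{A}=M_n(\mathbb{F})$ be endowed with an involution $*$, let $\mathcal{A}^+=\{a:a^*=a\}$, $\mathcal{A}^-=\{a:a^*=-a\}$, and let $u\in\mathcal{A}$ be invertible. Then: (1) if $*$ is the transpose involution and $u^{-1}\mathcal{A}^+u\subseteq\mathcal{A}^+$, then $u^{-1}\mathcal{A}^-u\subseteq\mathcal{A}^-$; (2) if $n=2k$, $*$ is the symplectic involution, and $u^{-1}\mathcal{A}^-u\subseteq\mathcal{A}^-$, then $u^{-1}\mathcal{A}^+u\subseteq\mathcal{A}^+$.
   Context: The symplectic involution on $M_{2k}(\mathbb{F})$ is $\begin{pmatrix}A&B\\C&D\end{pmatrix}^s=\begin{pmatrix}D^t&-B^t\\-C^t&A^t\end{pmatrix}$ for $A,B,C,D\in M_k(\mathbb{F})$. *)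

From HB Require Import structures.
From mathcomp Require Import all_boot all_order all_algebra.
Set Implicit Arguments. Unset Strict Implicit. Unset Printing Implicit Defensive.
Import GRing.Theory.
Local Open Scope ring_scope.

Definition sympl_inv (F : fieldType) (k : nat) (X : 'M[F]_(k + k)) : 'M[F]_(k + k) :=
  block_mx (drsubmx X)^T (- (ursubmx X)^T) (- (dlsubmx X)^T) (ulsubmx X)^T.

Definition sym_elt (T : zmodType) (star : T -> T) (a : T) : Prop := star a = a.
Definition skew_elt (T : zmodType) (star : T -> T) (a : T) : Prop := star a = - a.

Definition conj_stable (F : fieldType) (n : nat) (S : 'M[F]_n -> Prop)
  (u : 'M[F]_n) : Prop :=
  forall a, S a -> S (invmx u *m a *m u).

From mathcomp Require Import all_boot all_order all_algebra.
Set Implicit Arguments. Unset Strict Implicit. Unset Printing Implicit Defensive.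
Import GRing.Theory.
Local Open Scope ring_scope.

(* For an anti-automorphism * of M_n(F) and an invertible u, a conjugate
   u^-1 a u of an element a with a^* = +-a satisfies the same equation exactly
   when w := u u^* commutes with a.  Hence each stability hypothesis says that
   w centralizes A^+ or A^-.  Symmetric matrices generate M_n(F), because
   E_ij = E_ii (E_ij + E_ji) for i <> j, so a w centralizing them is central.
   For the transpose this turns stability of A^+ into stability of A^-.  For
   the symplectic involution X^s = J^T X^T J, the skew elements include J^T
   and every J^T S with S symmetric; a w commuting with all of them commutes
   with every symmetric S, so it is central again. *)

Lemma comm_mx_of_comm_sym (R : comPzRingType) (n : nat) (w : 'M[R]_n) :
  (forall S : 'M_n, S^T = S -> comm_mx w S) -> forall A, comm_mx w A.
Proof.
move=> commS A; rewrite [A]matrix_sum_delta.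
apply: comm_mx_sum => i _; apply: comm_mx_sum => j _.
rewrite -mul_scalar_mx; apply: comm_mxM; first exact: comm_mx_scalar.
have [<- | ij] := eqVneq i j; first by apply: commS; rewrite trmx_delta.
have -> : delta_mx i j = delta_mx i i *m (delta_mx i j + delta_mx j i) :> 'M[R]_n.
  by rewrite mulmxDr !mul_delta_mx_cond eqxx (negPf ij) addr0.
by apply: comm_mxM; apply: commS;
  rewrite ?trmx_delta // linearD /= !trmx_delta addrC.
Qed.

Lemma conjmx_eq_comm (R : comUnitRingType) (n : nat) (u t a : 'M[R]_n) :
  u \in unitmx -> t \in unitmx ->
  t *m a *m invmx t = invmx u *m a *m u <-> comm_mx (u *m t) a.
Proof.
move=> uU tU; rewrite /comm_mx mulmxA; split=> [E | C].
  have := congr1 (fun X => u *m X *m t) E.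
  by rewrite /= !mulmxA mulmxKV // mulmxV // mul1mx.
have := congr1 (fun X => invmx u *m X *m invmx t) C.
by rewrite /= !mulmxA mulVmx // mul1mx mulmxK.
Qed.

Section AntiMultiplicative.
Variables (F : fieldType) (n : nat) (star : 'M[F]_n -> 'M[F]_n).
Hypotheses (starM : forall a b, star (a *m b) = star b *m star a)
           (star1 : star 1%:M = 1%:M).

Lemma star_mulmxV u : u \in unitmx -> star u *m star (invmx u) = 1%:M.
Proof. by move=> uU; rewrite -starM mulVmx // star1. Qed.

Lemma star_unitmx u : u \in unitmx -> star u \in unitmx.
Proof. by move=> uU; have [] := mulmx1_unit (star_mulmxV uU). Qed.

Lemma star_invmx u : u \in unitmx -> star (invmx u) = invmx (star u).
Proof.
move=> uU; rewrite -[star (invmx u)](mulKmx (star_unitmx uU)).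
by rewrite star_mulmxV // mulmx1.
Qed.

Lemma star_conjmx u a : u \in unitmx ->
  star (invmx u *m a *m u) = star u *m star a *m invmx (star u).
Proof. by move=> uU; rewrite !starM star_invmx // mulmxA. Qed.

Lemma conj_stable_sym_comm u : u \in unitmx ->
  conj_stable (sym_elt star) u <->
  (forall a, sym_elt star a -> comm_mx (u *m star u) a).
Proof.
move=> uU; have tU := star_unitmx uU; rewrite /conj_stable /sym_elt.
split=> stable a a_sym.
  by apply/(conjmx_eq_comm _ uU tU); rewrite -{1}a_sym -star_conjmx // stable.
by rewrite star_conjmx // a_sym; apply/(conjmx_eq_comm _ uU tU)/stable.
Qed.

Lemma conj_stable_skew_comm u : u \in unitmx ->
  conj_stable (skew_elt star) u <->
  (forall a, skew_elt star a -> comm_mx (u *m star u) a).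
Proof.
move=> uU; have tU := star_unitmx uU; rewrite /conj_stable /skew_elt.
split=> stable a a_skew.
  apply/(conjmx_eq_comm _ uU tU)/oppr_inj.
  by rewrite -stable // star_conjmx // a_skew mulmxN mulNmx.
rewrite star_conjmx // a_skew mulmxN mulNmx; congr (- _).
exact/(conjmx_eq_comm _ uU tU)/stable.
Qed.

End AntiMultiplicative.

Section Symplectic.
Variables (F : fieldType) (k : nat).

Definition sympl_mx : 'M[F]_(k + k) := block_mx 0 1%:M (- 1%:M) 0.

Lemma tr_sympl_mx : sympl_mx^T = - sympl_mx.
Proof.
by rewrite tr_block_mx !trmx0 trmx1 linearN /= trmx1 opp_block_mx !oppr0 opprK.
Qed.

Lemma sympl_mx_sqr : sympl_mx *m sympl_mx = - 1%:M.
Proof.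
rewrite mulmx_block !mulmx0 !mul0mx mulmxN !mulmx1 !addr0 !add0r.
by rewrite scalar_mx_block opp_block_mx !oppr0.
Qed.

Lemma sympl_mx_trV : sympl_mx *m sympl_mx^T = 1%:M.
Proof. by rewrite tr_sympl_mx mulmxN sympl_mx_sqr opprK. Qed.

Lemma sympl_mx_trK : sympl_mx^T *m sympl_mx = 1%:M.
Proof. by rewrite tr_sympl_mx mulNmx sympl_mx_sqr opprK. Qed.

Lemma sympl_invE (X : 'M[F]_(k + k)) : sympl_inv X = sympl_mx^T *m X^T *m sympl_mx.
Proof.
rewrite -[X in RHS]submxK tr_block_mx tr_sympl_mx /sympl_mx !mulNmx !mulmx_block.
rewrite !mulmx0 !mul0mx !mulNmx !mul1mx !mulmxN !mulmx1 !addr0 !add0r.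
by rewrite opp_block_mx !opprK.
Qed.

Lemma sympl_invM (X Y : 'M[F]_(k + k)) :
  sympl_inv (X *m Y) = sympl_inv Y *m sympl_inv X.
Proof.
rewrite !sympl_invE trmx_mul !mulmxA.
by rewrite -[_ *m sympl_mx *m sympl_mx^T]mulmxA sympl_mx_trV mulmx1.
Qed.

Lemma sympl_inv1 : sympl_inv (1%:M : 'M[F]_(k + k)) = 1%:M.
Proof. by rewrite sympl_invE trmx1 mulmx1 sympl_mx_trK. Qed.

Lemma sympl_skew_trmx_mul_sym S :
  S^T = S -> skew_elt (@sympl_inv F k) (sympl_mx^T *m S).
Proof.
move=> S_sym; rewrite /skew_elt sympl_invE trmx_mul trmxK S_sym.
by rewrite -!mulmxA sympl_mx_sqr !mulmxN mulmx1.
Qed.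

Lemma comm_mx_of_comm_sympl_skew w :
  (forall a, skew_elt (@sympl_inv F k) a -> comm_mx w a) -> forall A, comm_mx w A.
Proof.
move=> comm_skew; apply: comm_mx_of_comm_sym => S S_sym.
have wJ := comm_skew _ (sympl_skew_trmx_mul_sym (trmx1 _ _)); rewrite mulmx1 in wJ.
have := comm_skew _ (sympl_skew_trmx_mul_sym S_sym).
rewrite /comm_mx mulmxA wJ -!mulmxA => /(congr1 (mulmx sympl_mx)).
by rewrite !mulmxA sympl_mx_trV !mul1mx.
Qed.

End Symplectic.

Theorem mainTheorem13 (F : fieldType) :
  (forall (n : nat) (u : 'M[F]_n), u \in unitmx ->
     conj_stable (sym_elt (@trmx F n n)) u ->
     conj_stable (skew_elt (@trmx F n n)) u)
  /\
  (forall (k : nat) (u : 'M[F]_(k + k)), u \in unitmx ->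
     conj_stable (skew_elt (@sympl_inv F k)) u ->
     conj_stable (sym_elt (@sympl_inv F k)) u).
Proof.
split=> [n u uU | k u uU].
  move/(conj_stable_sym_comm (@trmx_mul _ _ _ _) (trmx1 _ _) uU) => comm_sym.
  apply/(conj_stable_skew_comm (@trmx_mul _ _ _ _) (trmx1 _ _) uU) => a _.
  exact: comm_mx_of_comm_sym.
move/(conj_stable_skew_comm (@sympl_invM F k) (sympl_inv1 F k) uU) => comm_skew.
apply/(conj_stable_sym_comm (@sympl_invM F k) (sympl_inv1 F k) uU) => a _.
exact: comm_mx_of_comm_sympl_skew.
Qed.
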